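(* Let $a,b,c$ be integers with $a,b,c>1$ and let $$M=\begin{pmatrix} a & b\\ c & 1\end{pmatrix}.$$ Then $\mathrm{Cat}(M)\neq\emptyset$ if and only if $a-bc>0$.
   Context: For an $n\times n$ matrix $M=(m_{ij})$ with entries in the natural numbers, $\mathrm{Cat}(M)$ denotes the collection of categories $A$ with exactly $n$ distinct objects $x_1,\dots,x_n$ such that $|A(x_i,x_j)|=m_{ij}$ for all $i,j$, where $A(x_i,x_j)$ is the set of morphisms from $x_i$ to $x_j$. One says $M$ ''works'' if $\mathrm{Cat}(M)\neq\emptyset$. *)

From mathcomp Require Import all_boot all_algebra.
Set Implicit Arguments. Unset Strict Implicit. Unset Printing Implicit Defensive.

Record category (n : nat) := Category {
  hom : 'I_n -> 'I_n -> finType;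
  idm : forall i, hom i i;
  comp : forall i j k, hom j k -> hom i j -> hom i k;
  comp_id_l : forall i j (f : hom i j), comp (idm j) f = f;
  comp_id_r : forall i j (f : hom i j), comp f (idm i) = f;
  comp_assoc : forall i j k l (h : hom k l) (g : hom j k) (f : hom i j),
      comp h (comp g f) = comp (comp h g) f
}.

(* Cat(M) is nonempty: some category with objects x_1..x_n has |A(x_i,x_j)| = m_ij *)
Definition works (n : nat) (M : 'M[nat]_n) : Prop :=
  exists C : category n, forall i j : 'I_n, #|hom C i j| = M i j.

Definition mat2 (a b c d : nat) : 'M[nat]_2 :=
  \matrix_(i < 2, j < 2)
    if (nat_of_ord i == 0)%N then (if (nat_of_ord j == 0)%N then a else b)
    else (if (nat_of_ord j == 0)%N then c else d).

From Pilot Require Import Defs.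
From mathcomp Require Import all_boot matrix zify.

(* If the second object [y] has a single endomorphism, then [f \o g = id_y]
   for all [f : x -> y] and [g : y -> x]; hence [(g, f) |-> g \o f] is
   injective, and it misses [id_x] as soon as there are two maps [x -> y].
   So [a >= b c + 1].  Conversely, take [id_x], all formal composites
   [g \o f], and [a - b c - 1] extra endomorphisms of [x], each of which
   behaves under composition like one fixed composite [g0 \o f0]. *)

Section TrivialEndomorphisms.
Variables (n : nat) (C : category n) (x y : 'I_n).
Hypothesis hom_yy_le1 : #|hom C y y| <= 1.

Lemma comp_hom_xy_yx (f : hom C x y) (g : hom C y x) : Defs.comp f g = idm C y.
Proof. exact: (card_le1_eqP hom_yy_le1). Qed.

Lemma comp_pair_inj :
  injective (fun p : hom C y x * hom C x y => Defs.comp p.1 p.2).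
Proof.
move=> [g f] [g' f'] /= Egf; congr (_, _).
- by rewrite -[g]comp_id_r -(comp_hom_xy_yx f g') comp_assoc Egf
             -comp_assoc comp_hom_xy_yx comp_id_r.
- by rewrite -[f]comp_id_l -(comp_hom_xy_yx f' g) -comp_assoc Egf
             comp_assoc comp_hom_xy_yx comp_id_l.
Qed.

Lemma comp_neq_idm (g : hom C y x) (f : hom C x y) :
  1 < #|hom C x y| -> Defs.comp g f != idm C x.
Proof.
move=> /card_gt1P [f1 [f2 [_ _ /eqP f12]]]; apply/eqP => Egf; apply: f12.
have unique_f (f' : hom C x y) : f' = f.
  by rewrite -[f']comp_id_r -Egf comp_assoc comp_hom_xy_yx comp_id_l.
by rewrite (unique_f f1) (unique_f f2).
Qed.

Lemma card_hom_xx_gt :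
  1 < #|hom C x y| -> #|hom C y x| * #|hom C x y| < #|hom C x x|.
Proof.
move=> hom_xy_gt1.
pose F (o : option (hom C y x * hom C x y)) : hom C x x :=
  if o is Some p then Defs.comp p.1 p.2 else idm C x.
have F_inj : injective F.
  move=> [[g f]|] [[g' f']|] //= E.
  - by rewrite (@comp_pair_inj (g, f) (g', f') E).
  - by move/eqP: E; rewrite (negPf (comp_neq_idm g f hom_xy_gt1)).
  - by move/eqP: E; rewrite eq_sym (negPf (comp_neq_idm g' f' hom_xy_gt1)).
by have := leq_card F F_inj; rewrite card_option card_prod.
Qed.

End TrivialEndomorphisms.

Section FactorizationCategory.
Variables (B C E : finType) (b0 : B) (c0 : C).

(* Object [true] is [x] and [false] is [y]; the endomorphism [inl (g, f)]
   of [x] stands for [g \o f], and each [inr _] behaves like [c0 \o b0]. *)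
Definition factor (u : C * B + E) : C * B :=
  if u is inl p then p else (c0, b0).

Definition fhom (p q : bool) : finType :=
  match p, q with
  | true, true => option (C * B + E)
  | true, false => B
  | false, true => C
  | false, false => unit
  end.

Definition fidm (p : bool) : fhom p p :=
  match p with true => None | false => tt end.

Definition fcomp (p q r : bool) : fhom q r -> fhom p q -> fhom p r :=
  match p, q, r return fhom q r -> fhom p q -> fhom p r with
  | true, true, true => fun u v =>
      match u, v with
      | None, _ => v
      | _, None => u
      | Some u', Some v' => Some (inl ((factor u').1, (factor v').2))
      end
  | true, true, false => fun h v =>
      if v is Some v' then (factor v').2 else h
  | true, false, true => fun g f => Some (inl (g, f))
  | true, false, false => fun _ f => f
  | false, true, true => fun u g =>
      if u is Some u' then (factor u').1 else g
  | false, true, false => fun _ _ => tt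
  | false, false, true => fun g _ => g
  | false, false, false => fun _ _ => tt
  end.
Arguments fcomp {p q r}.

Lemma fcomp_id_l p q (f : fhom p q) : fcomp (fidm q) f = f.
Proof. by case: p q f => [] [] //= [] // [] []. Qed.

Lemma fcomp_id_r p q (f : fhom p q) : fcomp f (fidm p) = f.
Proof. by case: p q f => [] [] //= [] // [] []. Qed.

Lemma fcomp_assoc p q r s (h : fhom r s) (g : fhom q r) (f : fhom p q) :
  fcomp h (fcomp g f) = fcomp (fcomp h g) f.
Proof.
case: p q r s h g f => [] [] [] [] //= h g f;
  repeat match goal with
  | u : option _ |- _ => case: u => [u|]
  | u : unit |- _ => case: u
  end => //=.
Qed.

Definition factorization_category : category 2 :=
  @Category 2 (fun i j => fhom (i == 0 :> nat) (j == 0 :> nat))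
    (fun i => fidm _) (fun i j k => fcomp)
    (fun i j => fcomp_id_l _ _) (fun i j => fcomp_id_r _ _)
    (fun i j k l => fcomp_assoc _ _ _ _).

Lemma factorization_category_works :
  works (mat2 (#|C| * #|B| + #|E|).+1 #|B| #|C| 1).
Proof.
exists factorization_category => -[[|[|//]] i2] [[|[|//]] j2];
  rewrite mxE /= ?card_unit //.
by rewrite card_option card_sum card_prod.
Qed.

End FactorizationCategory.

Lemma works_mat2_lt a b c :
  1 < b -> works (mat2 a b c 1) -> b * c < a.
Proof.
move=> hb [C cardC].
have := @card_hom_xx_gt 2 C ord0 ord_max.
by rewrite !cardC !mxE /= mulnC; apply.
Qed.

Lemma works_mat2_of_lt a b c :
  0 < b -> 0 < c -> b * c < a -> works (mat2 a b c 1).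
Proof.
move=> hb hc hbc.
have := @factorization_category_works 'I_b 'I_c 'I_(a - b * c).-1
  (Ordinal hb) (Ordinal hc).
by rewrite !card_ord (_ : (c * b + _).+1 = a) //; lia.
Qed.

Theorem mainTheorem1 (a b c : nat) :
  (1 < a)%N -> (1 < b)%N -> (1 < c)%N ->
  (works (mat2 a b c 1) <-> (b * c < a)%N).
Proof.
move=> _ hb hc; split; first exact: works_mat2_lt.
by apply: works_mat2_of_lt; apply: ltnW.
Qed.
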